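(* Consider Model A with $\delta>-1$. There exists a constant $C>0$ such that, as $n\to\infty$, $$\mathbf P\Bigl(\max_{k}\bigl|N_{>k}(n)-np_{>k}\bigr|\ge C\bigl(1+\sqrt{n\log n}\bigr)\Bigr)=o(1).$$
   Context: Model A (with $\delta>-1$): $G(1)$ consists of a single node $v_1$ with a self loop (so $v_1$ has degree 2; a self loop contributes 2 to the degree). For $n\ge1$, given $G(n)$ (nodes $v_1,\dots,v_n$, $n$ edges), $G(n+1)$ is obtained by adding a new node $v_{n+1}$ and one edge joining $v_{n+1}$ to an existing node $v_i$, $1\le i\le n$, chosen with probability $\frac{D_i(n)+\delta}{(2+\delta)n}$, where $D_i(n)$ is the degree of $v_i$ in $G(n)$. $N_{>k}(n):=\#\{1\le i\le n: D_i(n)>k\}$ for $k\ge1$, $N_{>0}(n):=n$. For $k\ge0$, $$p_{>k}:=\frac{\Gamma(k+1+\delta)\,\Gamma(3+2\delta)}{\Gamma(k+3+2\delta)\,\Gamma(1+\delta)}.$$ *)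

(* Model A preferential attachment, as an explicit finite
   probability space over attachment-choice sequences. *)
From Stdlib Require Import Reals Lra Lia Arith List ClassicalEpsilon.
Import ListNotations.
Open Scope R_scope.

(* Nodes are 0-indexed: node i here is v_{i+1} in the paper.
   A history of G(n) is a list s of length n-1; its m-th entry (0-based)
   is the node to which v_{m+2} attached when passing from G(m+1) to G(m+2);
   it lies in {0,...,m}. *)
Fixpoint histories (n : nat) : list (list nat) :=
  match n with
  | O => [ [] ]
  | S m => flat_map (fun s => map (fun c => s ++ [c]) (seq 0 (S m))) (histories m)
  end.

(* Degree of node i in the graph with history s:
   node 0 carries a self loop (degree 2), every other node has one edge to
   its target; plus one for each later node attaching to it. *)
Definition deg (s : list nat) (i : nat) : nat :=
  (if Nat.eqb i 0 then 2 else 1) + count_occ Nat.eq_dec s i.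

(* Probability of history s: product of the attachment probabilities
   (D_i(m)+delta)/((2+delta) m) at each step from G(m) to G(m+1). *)
Fixpoint wt_aux (delta : R) (pre rest : list nat) : R :=
  match rest with
  | [] => 1
  | c :: r => (INR (deg pre c) + delta) / ((2 + delta) * INR (S (length pre)))
              * wt_aux delta (pre ++ [c]) r
  end.

Definition weight (delta : R) (s : list nat) : R := wt_aux delta [] s.

(* Probability, in Model A, that G(N) satisfies the event E (given as a
   predicate on histories of G(N)), for N >= 1. *)
Definition probA (delta : R) (N : nat) (E : list nat -> Prop) : R :=
  fold_right Rplus 0
    (map (fun s => if excluded_middle_informative (E s) then weight delta s else 0)
         (histories (N - 1))).

Definition Ngt (s : list nat) (k : nat) : nat :=
  length (filter (fun i => Nat.ltb k (deg s i)) (seq 0 (S (length s)))).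

(* p_{>k} = Gamma(k+1+d)Gamma(3+2d)/(Gamma(k+3+2d)Gamma(1+d)),
   written via Gamma(x+k)/Gamma(x) = prod_{j<k} (x+j). *)
Fixpoint pgt (delta : R) (k : nat) : R :=
  match k with
  | O => 1
  | S j => pgt delta j * ((1 + delta + INR j) / (3 + 2 * delta + INR j))
  end.

(* Let D_k = N_{>k} - t p_{>k} be the deviation at level k when the graph has t nodes.
   In one step D_{k+1} changes by at most 1, and by the balance equation
   p_{>k+1} = (k+1+delta)/(2+delta) (p_{>k} - p_{>k+1}) its conditional mean becomes the
   convex combination (1-a) D_{k+1} + a D_k, where a = (k+1+delta)/((2+delta)t).  By convexity
   of exp, the sum over all levels k <= N of exp(theta D_k) grows in expectation by at most
   e^{4 theta^2}(1+1/t) per step, so at time N it has mean O(N^2 e^{4 theta^2 N}) for both signs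
   of theta.  Markov's inequality with theta = sqrt(ln N / N)/2 and the threshold
   8(1 + sqrt(N ln N)) then bounds the probability of a large deviation by 8/N. *)

From Stdlib Require Import Reals List Lra Lia ClassicalEpsilon.
Import ListNotations.
Open Scope R_scope.

Definition lsum {A : Type} (f : A -> R) (l : list A) : R := fold_right Rplus 0 (map f l).

Lemma lsum_cons {A : Type} (f : A -> R) x l : lsum f (x :: l) = f x + lsum f l.
Proof. reflexivity. Qed.

Lemma lsum_app {A : Type} (f : A -> R) l1 l2 : lsum f (l1 ++ l2) = lsum f l1 + lsum f l2.
Proof.
  induction l1 as [|x l1 IH]; cbn [app]; [change (lsum f []) with 0; ring|].
  rewrite !lsum_cons, IH; ring.
Qed.

Lemma lsum_ext_in {A : Type} (f g : A -> R) l : (forall x, In x l -> f x = g x) -> lsum f l = lsum g l.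
Proof.
  induction l as [|x l IH]; intros H; [reflexivity|].
  rewrite !lsum_cons, H, IH; [reflexivity| |simpl; auto].
  intros; apply H; simpl; auto.
Qed.

Lemma lsum_le_compat {A : Type} (f g : A -> R) l :
  (forall x, In x l -> f x <= g x) -> lsum f l <= lsum g l.
Proof.
  induction l as [|x l IH]; intros H; cbn; [lra|].
  apply Rplus_le_compat; [apply H; simpl; auto|apply IH; intros; apply H; simpl; auto].
Qed.

Lemma lsum_const {A : Type} (c : R) (l : list A) : lsum (fun _ => c) l = c * INR (length l).
Proof.
  induction l as [|x l IH]; [cbn; ring|].
  rewrite lsum_cons, IH. cbn [length]. rewrite S_INR; ring.
Qed.

Lemma lsum_nonneg {A : Type} (f : A -> R) l : (forall x, In x l -> 0 <= f x) -> 0 <= lsum f l.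
Proof.
  intros H. replace 0 with (lsum (fun _ => 0) l) by (rewrite lsum_const; ring).
  now apply lsum_le_compat.
Qed.

Lemma lsum_mult_l {A : Type} (c : R) (f : A -> R) l : lsum (fun x => c * f x) l = c * lsum f l.
Proof. induction l as [|x l IH]; [cbn; ring|]. rewrite !lsum_cons, IH; ring. Qed.

Lemma lsum_plus {A : Type} (f g : A -> R) l : lsum (fun x => f x + g x) l = lsum f l + lsum g l.
Proof. induction l as [|x l IH]; [cbn; ring|]. rewrite !lsum_cons, IH; ring. Qed.

Lemma lsum_ge_term {A : Type} (f : A -> R) l x :
  (forall y, In y l -> 0 <= f y) -> In x l -> f x <= lsum f l.
Proof.
  induction l as [|y l IH]; intros H Hx; [destruct Hx|]. rewrite lsum_cons.
  destruct Hx as [<-|Hx].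
  - assert (0 <= lsum f l) by (apply lsum_nonneg; intros; apply H; simpl; auto). lra.
  - assert (0 <= f y) by (apply H; simpl; auto).
    assert (f x <= lsum f l) by (apply IH; auto; intros; apply H; simpl; auto). lra.
Qed.

Lemma lsum_map {A B : Type} (f : B -> R) (h : A -> B) l : lsum f (map h l) = lsum (fun x => f (h x)) l.
Proof. unfold lsum. now rewrite map_map. Qed.

Lemma lsum_flat_map {A B : Type} (f : B -> R) (h : A -> list B) l :
  lsum f (flat_map h l) = lsum (fun x => lsum f (h x)) l.
Proof.
  induction l as [|x l IH]; [reflexivity|].
  change (flat_map h (x :: l)) with (h x ++ flat_map h l).
  now rewrite lsum_app, lsum_cons, IH.
Qed.

Lemma lsum_comm {A B : Type} (F : A -> B -> R) (l : list A) (m : list B) :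
  lsum (fun x => lsum (F x) m) l = lsum (fun y => lsum (fun x => F x y) l) m.
Proof.
  induction m as [|y m IH].
  - rewrite (lsum_ext_in _ (fun _ => 0)), lsum_const by reflexivity. cbn; ring.
  - rewrite lsum_cons, <- IH, <- lsum_plus. apply lsum_ext_in; intros; apply lsum_cons.
Qed.

Lemma lsum_seq_S (f : nat -> R) n : lsum f (seq 0 (S n)) = lsum f (seq 0 n) + f n.
Proof. rewrite seq_S, lsum_app. cbn; ring. Qed.

Lemma exp_le_compat x y : x <= y -> exp x <= exp y.
Proof. intros [H| ->]; [left; now apply exp_increasing|lra]. Qed.

Lemma exp_le_inv_1_minus x : x < 1 -> exp x <= / (1 - x).
Proof.
  intros Hx. pose proof (exp_ineq1_le (- x)) as H. rewrite exp_Ropp in H.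
  pose proof (exp_pos x).
  apply (Rmult_le_reg_l (1 - x)); [lra|]. rewrite Rinv_r by lra.
  apply (Rmult_le_reg_r (/ exp x)); [now apply Rinv_0_lt_compat|].
  rewrite Rmult_1_l, Rmult_assoc, Rinv_r by lra. lra.
Qed.

Lemma exp_le_quadratic x : - / 2 <= x <= / 2 -> exp x <= 1 + x + 2 * x * x.
Proof.
  intros Hx. eapply Rle_trans; [apply exp_le_inv_1_minus; lra|].
  apply (Rmult_le_reg_l (1 - x)); [lra|]. rewrite Rinv_r by lra. nra.
Qed.

Lemma exp_le_linear x : 0 <= x <= / 2 -> exp x <= 1 + 2 * x.
Proof.
  intros Hx. eapply Rle_trans; [apply exp_le_inv_1_minus; lra|].
  apply (Rmult_le_reg_l (1 - x)); [lra|]. rewrite Rinv_r by lra. nra.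
Qed.

(* [exp] lies above its tangent line at [(1 - a) * x + a * y]. *)
Lemma exp_convex a x y : 0 <= a <= 1 ->
  exp ((1 - a) * x + a * y) <= (1 - a) * exp x + a * exp y.
Proof.
  intros Ha. set (m := (1 - a) * x + a * y).
  replace (exp x) with (exp m * exp (x - m)) by (rewrite <- exp_plus; f_equal; ring).
  replace (exp y) with (exp m * exp (y - m)) by (rewrite <- exp_plus; f_equal; ring).
  pose proof (exp_ineq1_le (x - m)). pose proof (exp_ineq1_le (y - m)). pose proof (exp_pos m).
  assert (Hm : (1 - a) * (x - m) + a * (y - m) = 0) by (unfold m; ring).
  assert (0 <= exp m * ((1 - a) * (exp (x - m) - 1 - (x - m)) + a * (exp (y - m) - 1 - (y - m))))
    by (apply Rmult_le_pos; [lra|]; apply Rplus_le_le_0_compat; apply Rmult_le_pos; lra).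
  nra.
Qed.

Lemma mgf_bounded_le {A : Type} (w d : A -> R) (l : list A) (th : R) :
  (forall c, In c l -> 0 <= w c) -> lsum w l = 1 ->
  (forall c, In c l -> -1 <= d c <= 1) -> - / 2 <= th <= / 2 ->
  lsum (fun c => w c * exp (th * d c)) l <=
  exp (4 * th * th) * exp (th * lsum (fun c => w c * d c) l).
Proof.
  intros Hw Hsum Hd Hth.
  set (mu := lsum (fun c => w c * d c) l).
  assert (Hquad : lsum (fun c => w c * exp (th * d c)) l <=
                  lsum w l + th * mu + 2 * th * th * lsum w l).
  { unfold mu. rewrite <- !lsum_mult_l, <- !lsum_plus.
    apply lsum_le_compat; intros c Hc. specialize (Hw c Hc). specialize (Hd c Hc).
    assert (d c * d c <= 1) by nra.
    pose proof (exp_le_quadratic (th * d c) ltac:(split; nra)).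
    assert (exp (th * d c) <= 1 + th * d c + 2 * th * th) by nra.
    assert (w c * exp (th * d c) <= w c * (1 + th * d c + 2 * th * th))
      by (apply Rmult_le_compat_l; lra).
    lra. }
  assert (Hmu : -1 <= mu <= 1).
  { replace (-1) with (lsum (fun c => -1 * w c) l) by (rewrite lsum_mult_l, Hsum; ring).
    rewrite <- Hsum. unfold mu. split;
      apply lsum_le_compat; intros c Hc; specialize (Hw c Hc); specialize (Hd c Hc); nra. }
  rewrite Hsum in Hquad.
  pose proof (exp_ineq1_le (th * mu)). pose proof (exp_ineq1_le (4 * th * th)).
  assert (0 <= exp (th * mu) * (exp (4 * th * th) - 1 - 4 * th * th))
    by (apply Rmult_le_pos; [left; apply exp_pos|lra]).
  assert (- / 2 <= th * mu) by nra.
  assert (0 <= th * th * (exp (th * mu) - / 2)) by (apply Rmult_le_pos; nra).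
  nra.
Qed.

Definition attach_rate (delta : R) (t k : nat) : R := (INR k + delta) / ((2 + delta) * INR t).

Definition attach_prob (delta : R) (s : list nat) (c : nat) : R :=
  attach_rate delta (S (length s)) (deg s c).

Definition valid_history (s : list nat) : Prop := forall c, In c s -> (c < S (length s))%nat.

Lemma in_histories m s : In s (histories m) -> length s = m /\ valid_history s.
Proof.
  revert s; induction m as [|m IH]; intros s Hs.
  - destruct Hs as [<-|[]]. split; [reflexivity|intros _ []].
  - cbn [histories] in Hs. apply in_flat_map in Hs as [s0 [Hs0 Hs]].
    apply in_map_iff in Hs as [c [<- Hc]]. apply in_seq in Hc.
    destruct (IH s0 Hs0) as [Hl Hv]. rewrite length_app. cbn [length]. split; [lia|].
    intros x Hx. rewrite length_app. cbn [length].
    apply in_app_or in Hx as [Hx|[<-|[]]]; [specialize (Hv x Hx)|]; lia.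
Qed.

Lemma count_occ_le_length (l : list nat) x : (count_occ Nat.eq_dec l x <= length l)%nat.
Proof. induction l as [|y l IH]; cbn; [lia|]. destruct (Nat.eq_dec y x); lia. Qed.

Lemma deg_bounds s i : (1 <= deg s i <= 2 + length s)%nat.
Proof. unfold deg. pose proof (count_occ_le_length s i). destruct (Nat.eqb i 0); lia. Qed.

Lemma deg_snoc s c i : deg (s ++ [c]) i = (deg s i + if Nat.eq_dec c i then 1 else 0)%nat.
Proof. unfold deg. rewrite count_occ_app. cbn. destruct (Nat.eq_dec c i); lia. Qed.

Lemma attach_rate_pos delta t k : -1 < delta -> (1 <= k)%nat -> (1 <= t)%nat ->
  0 < attach_rate delta t k.
Proof.
  intros Hd Hk Ht. apply le_INR in Hk, Ht. unfold attach_rate.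
  apply Rdiv_lt_0_compat; [|apply Rmult_lt_0_compat]; cbn in Hk, Ht; lra.
Qed.

Lemma attach_prob_pos delta s c : -1 < delta -> 0 < attach_prob delta s c.
Proof. intros Hd. apply attach_rate_pos; [exact Hd|apply deg_bounds|lia]. Qed.

Lemma wt_aux_snoc delta pre s c :
  wt_aux delta pre (s ++ [c]) = wt_aux delta pre s * attach_prob delta (pre ++ s) c.
Proof.
  revert pre; induction s as [|x s IH]; intros pre; cbn [wt_aux app].
  - rewrite app_nil_r. unfold attach_prob, attach_rate. ring.
  - rewrite IH, <- app_assoc. cbn [app]. ring.
Qed.

Lemma weight_snoc delta s c : weight delta (s ++ [c]) = weight delta s * attach_prob delta s c.
Proof. apply wt_aux_snoc. Qed.

Lemma weight_nonneg delta s : -1 < delta -> 0 <= weight delta s.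
Proof.
  intros Hd. unfold weight. generalize (@nil nat) as pre.
  induction s as [|c s IH]; intros pre; cbn [wt_aux]; [lra|].
  apply Rmult_le_pos; [left; apply (attach_prob_pos delta pre c Hd)|apply IH].
Qed.

Definition expect (delta : R) (m : nat) (F : list nat -> R) : R :=
  lsum (fun s => weight delta s * F s) (histories m).

Definition cond_expect (delta : R) (s : list nat) (F : list nat -> R) : R :=
  lsum (fun c => attach_prob delta s c * F (s ++ [c])) (seq 0 (S (length s))).

Lemma expect_S delta m F :
  expect delta (S m) F = expect delta m (fun s => cond_expect delta s F).
Proof.
  unfold expect. cbn [histories]. rewrite lsum_flat_map. apply lsum_ext_in; intros s Hs.
  destruct (in_histories m s Hs) as [Hl _]. unfold cond_expect.
  rewrite Hl, lsum_map, <- lsum_mult_l. apply lsum_ext_in; intros c _. rewrite weight_snoc. ring.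
Qed.

Lemma expect_le_compat delta m F G : -1 < delta ->
  (forall s, In s (histories m) -> F s <= G s) -> expect delta m F <= expect delta m G.
Proof.
  intros Hd H. apply lsum_le_compat; intros s Hs.
  apply Rmult_le_compat_l; [apply weight_nonneg|apply H]; assumption.
Qed.

Lemma expect_mult_l delta m c F : expect delta m (fun s => c * F s) = c * expect delta m F.
Proof. unfold expect. rewrite <- lsum_mult_l. apply lsum_ext_in; intros; ring. Qed.

Lemma expect_plus delta m F G :
  expect delta m (fun s => F s + G s) = expect delta m F + expect delta m G.
Proof. unfold expect. rewrite <- lsum_plus. apply lsum_ext_in; intros; ring. Qed.

Lemma lsum_indicator_seq x t : (x < t)%nat ->
  lsum (fun c => if Nat.eq_dec x c then 1 else 0) (seq 0 t) = 1.
Proof.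
  intros Hx. transitivity (INR (count_occ Nat.eq_dec (seq 0 t) x)).
  - generalize (seq 0 t) as l. induction l as [|c l IH]; [reflexivity|].
    rewrite lsum_cons, IH. cbn [count_occ].
    destruct (Nat.eq_dec x c), (Nat.eq_dec c x); subst; try congruence; rewrite ?S_INR; ring.
  - rewrite (proj1 (NoDup_count_occ' Nat.eq_dec _) (seq_NoDup t 0)); [reflexivity|].
    apply in_seq; lia.
Qed.

Lemma lsum_count_occ s t : (forall x, In x s -> (x < t)%nat) ->
  lsum (fun c => INR (count_occ Nat.eq_dec s c)) (seq 0 t) = INR (length s).
Proof.
  induction s as [|x s IH]; intros Hs.
  - rewrite (lsum_ext_in _ (fun _ => 0)), lsum_const by reflexivity. cbn; ring.
  - rewrite (lsum_ext_in _ (fun c => INR (count_occ Nat.eq_dec s c) + if Nat.eq_dec x c then 1 else 0)).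
    + rewrite lsum_plus, IH, lsum_indicator_seq by (intros; apply Hs; simpl; auto).
      cbn [length]. rewrite S_INR. ring.
    + intros c _. cbn [count_occ]. destruct (Nat.eq_dec x c); rewrite ?S_INR; ring.
Qed.

(* Each of the [t] edges, the loop at node 0 included, contributes 2 to the degree sum. *)
Lemma lsum_deg s : valid_history s ->
  lsum (fun c => INR (deg s c)) (seq 0 (S (length s))) = 2 * INR (S (length s)).
Proof.
  intros Hv. unfold deg.
  rewrite (lsum_ext_in _ (fun c => INR (if Nat.eqb c 0 then 2 else 1) + INR (count_occ Nat.eq_dec s c)))
    by (intros; apply plus_INR).
  rewrite lsum_plus, lsum_count_occ by exact Hv. cbn [seq]. rewrite lsum_cons.
  rewrite (lsum_ext_in _ (fun _ => 1)).
  - rewrite lsum_const, length_seq, S_INR. cbn. ring.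
  - intros c Hc. apply in_seq in Hc. destruct c; [lia|reflexivity].
Qed.

Lemma lsum_attach_prob delta s : -1 < delta -> valid_history s ->
  lsum (attach_prob delta s) (seq 0 (S (length s))) = 1.
Proof.
  intros Hd Hv. unfold attach_prob, attach_rate, Rdiv.
  rewrite (lsum_ext_in _ (fun c => / ((2 + delta) * INR (S (length s))) * (INR (deg s c) + delta)))
    by (intros; ring).
  rewrite lsum_mult_l, lsum_plus, lsum_deg, lsum_const, length_seq by exact Hv.
  pose proof (pos_INR (length s)). rewrite S_INR. field. split; lra.
Qed.

Definition count_deg (s : list nat) (k : nat) : nat :=
  length (filter (fun i => Nat.eqb (deg s i) k) (seq 0 (S (length s)))).

Lemma length_filter_true {A : Type} (f : A -> bool) l :
  (forall x, In x l -> f x = true) -> length (filter f l) = length l.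
Proof.
  induction l as [|x l IH]; intros H; cbn; [reflexivity|].
  rewrite H by (simpl; auto). cbn. f_equal. apply IH; intros; apply H; simpl; auto.
Qed.

Lemma length_filter_false {A : Type} (f : A -> bool) l :
  (forall x, In x l -> f x = false) -> length (filter f l) = O.
Proof.
  induction l as [|x l IH]; intros H; cbn; [reflexivity|].
  rewrite H by (simpl; auto). apply IH; intros; apply H; simpl; auto.
Qed.

Lemma Ngt_0 s : Ngt s 0 = S (length s).
Proof.
  unfold Ngt. rewrite length_filter_true, length_seq; [reflexivity|].
  intros i _. apply Nat.ltb_lt. apply deg_bounds.
Qed.

Lemma Ngt_large s k : (2 + length s <= k)%nat -> Ngt s k = O.
Proof.
  intros Hk. apply length_filter_false. intros i _. apply Nat.ltb_ge.
  pose proof (deg_bounds s i). lia.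
Qed.

Lemma count_deg_large s k : (3 + length s <= k)%nat -> count_deg s k = O.
Proof.
  intros Hk. apply length_filter_false. intros i _. apply Nat.eqb_neq.
  pose proof (deg_bounds s i). lia.
Qed.

Lemma Ngt_split s k : Ngt s k = (Ngt s (S k) + count_deg s (S k))%nat.
Proof.
  unfold Ngt, count_deg. induction (seq 0 (S (length s))) as [|i l IH]; [reflexivity|].
  cbn [filter]. destruct (Nat.ltb_spec k (deg s i)), (Nat.ltb_spec (S k) (deg s i)),
    (Nat.eqb_spec (deg s i) (S k)); cbn [length]; lia.
Qed.

Lemma length_filter_bump (g h : nat -> nat) c k l :
  (forall i, h i = g i + if Nat.eq_dec c i then 1 else 0)%nat ->
  length (filter (fun i => Nat.ltb k (h i)) l) =
  (length (filter (fun i => Nat.ltb k (g i)) l) +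
   count_occ Nat.eq_dec l c * if Nat.eqb (g c) k then 1 else 0)%nat.
Proof.
  intros Hh. induction l as [|i l IH]; [reflexivity|]. cbn [filter count_occ]. rewrite Hh.
  destruct (Nat.eq_dec c i), (Nat.eq_dec i c); subst; try congruence.
  - destruct (Nat.ltb_spec k (g i + 1)), (Nat.ltb_spec k (g i)), (Nat.eqb_spec (g i) k);
      cbn [length]; lia.
  - rewrite Nat.add_0_r. destruct (Nat.ltb_spec k (g i)); cbn [length]; lia.
Qed.

Lemma Ngt_snoc s c k : valid_history s -> (c < S (length s))%nat ->
  Ngt (s ++ [c]) (S k) = (Ngt s (S k) + if Nat.eqb (deg s c) (S k) then 1 else 0)%nat.
Proof.
  intros Hv Hc. unfold Ngt. rewrite length_app, Nat.add_1_r, seq_S, filter_app, length_app.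
  assert (Hnew : Nat.ltb (S k) (deg (s ++ [c]) (S (length s))) = false).
  { apply Nat.ltb_ge. unfold deg. cbn [Nat.eqb].
    rewrite (proj1 (count_occ_not_In _ _ _)); [lia|].
    intros Hin. apply in_app_or in Hin as [Hin|[E|[]]]; [specialize (Hv _ Hin)|]; lia. }
  rewrite Nat.add_0_l. cbn [filter]. rewrite Hnew. cbn [length]. rewrite Nat.add_0_r.
  rewrite (length_filter_bump (deg s) (deg (s ++ [c])) c (S k)) by (intros; apply deg_snoc).
  rewrite (proj1 (NoDup_count_occ' Nat.eq_dec _) (seq_NoDup _ 0)) by (apply in_seq; lia).
  lia.
Qed.

Lemma pgt_bounds delta k : -1 < delta -> 0 <= pgt delta k /\ pgt delta k * (INR k + 1) <= 1.
Proof.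
  intros Hd. induction k as [|k [Hp0 Hp1]]; cbn [pgt]; [cbn; lra|].
  pose proof (pos_INR k). rewrite S_INR.
  assert (Hq : 0 <= (1 + delta + INR k) / (3 + 2 * delta + INR k))
    by (apply Rmult_le_pos; [lra|left; apply Rinv_0_lt_compat; lra]).
  split; [now apply Rmult_le_pos|].
  assert (Hq1 : (1 + delta + INR k) / (3 + 2 * delta + INR k) * (INR k + 1 + 1) <= INR k + 1).
  { replace ((1 + delta + INR k) / (3 + 2 * delta + INR k) * (INR k + 1 + 1))
      with ((1 + delta + INR k) * (INR k + 2) / (3 + 2 * delta + INR k)) by (field; lra).
    apply (Rmult_le_reg_r (3 + 2 * delta + INR k)); [lra|].
    unfold Rdiv. rewrite Rmult_assoc, Rinv_l, Rmult_1_r by lra. nra. }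
  rewrite Rmult_assoc. eapply Rle_trans; [apply Rmult_le_compat_l; [exact Hp0|exact Hq1]|exact Hp1].
Qed.

Lemma pgt_le_inv delta k : -1 < delta -> pgt delta k <= / (INR k + 1).
Proof.
  intros Hd. destruct (pgt_bounds delta k Hd) as [_ H]. pose proof (pos_INR k).
  apply (Rmult_le_reg_r (INR k + 1)); [lra|]. rewrite Rinv_l by lra. exact H.
Qed.

Lemma pgt_S_balance delta k : -1 < delta ->
  pgt delta (S k) = (INR (S k) + delta) / (2 + delta) * (pgt delta k - pgt delta (S k)).
Proof. intros Hd. cbn [pgt]. rewrite S_INR. pose proof (pos_INR k). field. split; lra. Qed.

Definition dev (delta : R) (s : list nat) (k : nat) : R :=
  INR (Ngt s k) - INR (S (length s)) * pgt delta k.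

Lemma dev_0 delta s : dev delta s 0 = 0.
Proof. unfold dev. rewrite Ngt_0. cbn [pgt]. ring. Qed.

Lemma dev_snoc delta s c k : valid_history s -> (c < S (length s))%nat ->
  dev delta (s ++ [c]) (S k) =
  dev delta s (S k) + ((if Nat.eqb (deg s c) (S k) then 1 else 0) - pgt delta (S k)).
Proof.
  intros Hv Hc. unfold dev. rewrite Ngt_snoc, plus_INR, length_app, Nat.add_1_r, (S_INR (S _))
    by assumption.
  destruct (Nat.eqb (deg s c) (S k)); cbn [INR]; ring.
Qed.

Lemma dev_drift delta s k : -1 < delta ->
  let a := attach_rate delta (S (length s)) (S k) in
  dev delta s (S k) + (a * INR (count_deg s (S k)) - pgt delta (S k)) =
  (1 - a) * dev delta s (S k) + a * dev delta s k.
Proof.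
  intros Hd a. unfold dev. rewrite (Ngt_split s k), plus_INR.
  set (t := INR (S (length s))).
  assert (Ht : 0 < t) by (apply lt_0_INR; lia).
  assert (Hbal : a * t * (pgt delta k - pgt delta (S k)) = pgt delta (S k)).
  { rewrite (pgt_S_balance delta k Hd) at 2. unfold a, attach_rate. fold t. field. lra. }
  nra.
Qed.

Lemma lsum_attach_prob_deg_eq delta s k :
  lsum (fun c => attach_prob delta s c * if Nat.eqb (deg s c) k then 1 else 0)
       (seq 0 (S (length s))) =
  attach_rate delta (S (length s)) k * INR (count_deg s k).
Proof.
  unfold count_deg. induction (seq 0 (S (length s))) as [|c l IH].
  { cbn [filter length INR]. change (lsum _ []) with 0. ring. }
  rewrite lsum_cons, IH. cbn [filter]. unfold attach_prob.
  destruct (Nat.eqb_spec (deg s c) k) as [->|]; cbn [length]; rewrite ?S_INR; ring.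
Qed.

Lemma lsum_bidiagonal_le (u d b H : nat -> R) (g e : R) K :
  0 <= g -> (forall k, 0 <= u k) ->
  (forall k, d k <= e) -> (forall k, d k + b (S k) <= e) ->
  H O <= g * (d O * u O) ->
  (forall k, H (S k) <= g * (d (S k) * u (S k) + b (S k) * u k)) ->
  lsum H (seq 0 (S K)) <= g * e * lsum u (seq 0 (S K)).
Proof.
  intros Hg Hu Hd Hdb H0 HS.
  assert (Hpartial : forall K, lsum H (seq 0 (S K)) <= g * (e * lsum u (seq 0 K) + d K * u K)).
  { induction K0 as [|K0 IH].
    - cbn. change (lsum u []) with 0. lra.
    - rewrite (lsum_seq_S H (S K0)), (lsum_seq_S u K0).
      specialize (HS K0). specialize (Hdb K0). pose proof (Hu K0).
      assert (g * ((d K0 + b (S K0)) * u K0) <= g * (e * u K0))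
        by (apply Rmult_le_compat_l, Rmult_le_compat_r; assumption).
      nra. }
  specialize (Hpartial K). rewrite (lsum_seq_S u K).
  assert (g * (d K * u K) <= g * (e * u K))
    by (apply Rmult_le_compat_l, Rmult_le_compat_r; [|apply Hu|apply Hd]; assumption).
  nra.
Qed.

Definition mgf_diag (delta : R) (t k : nat) : R :=
  match k with
  | O => 1
  | S _ => if Rle_dec (attach_rate delta t k) 1 then 1 - attach_rate delta t k else 1 + / INR t
  end.

Definition mgf_subdiag (delta : R) (t k : nat) : R :=
  match k with
  | O => 0
  | S _ => if Rle_dec (attach_rate delta t k) 1 then attach_rate delta t k else 0
  end.

Lemma mgf_diag_le delta t k : -1 < delta -> (1 <= t)%nat -> mgf_diag delta t k <= 1 + / INR t.
Proof.
  intros Hd Ht. assert (0 < / INR t) by (apply Rinv_0_lt_compat, lt_0_INR; lia).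
  destruct k as [|k]; cbn [mgf_diag]; [lra|].
  pose proof (attach_rate_pos delta t (S k) Hd ltac:(lia) Ht).
  destruct (Rle_dec (attach_rate delta t (S k)) 1); lra.
Qed.

Lemma mgf_diag_subdiag_le delta t k : -1 < delta -> (1 <= t)%nat ->
  mgf_diag delta t k + mgf_subdiag delta t (S k) <= 1 + / INR t.
Proof.
  intros Hd Ht. apply le_INR in Ht. cbn [INR] in Ht.
  assert (Hstep : forall k,
    attach_rate delta t (S k) = attach_rate delta t k + / ((2 + delta) * INR t)).
  { intros j. unfold attach_rate. rewrite S_INR. field. split; lra. }
  assert (Hstep_le : / ((2 + delta) * INR t) <= / INR t) by (apply Rinv_le_contravar; nra).
  assert (0 < / ((2 + delta) * INR t)) by (apply Rinv_0_lt_compat; nra).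
  destruct k as [|k]; cbn [mgf_diag mgf_subdiag].
  - assert (attach_rate delta t 1 <= / INR t).
    { unfold attach_rate. cbn [INR]. apply (Rmult_le_reg_r ((2 + delta) * INR t)); [nra|].
      unfold Rdiv. rewrite Rmult_assoc, Rinv_l by nra.
      replace (/ INR t * ((2 + delta) * INR t)) with (2 + delta) by (field; lra). lra. }
    destruct (Rle_dec _ 1); lra.
  - pose proof (attach_rate_pos delta t (S k) Hd ltac:(lia) ltac:(apply INR_le; cbn; lra)).
    rewrite (Hstep (S k)). destruct (Rle_dec (attach_rate delta t (S k)) 1), (Rle_dec _ 1); lra.
Qed.

Definition mgf_sum (delta th : R) (K : nat) (s : list nat) : R :=
  lsum (fun k => exp (th * dev delta s k)) (seq 0 (S K)).

Lemma mgf_sum_nonneg delta th K s : 0 <= mgf_sum delta th K s.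
Proof. apply lsum_nonneg. intros; left; apply exp_pos. Qed.

Section OneStep.

Variables (delta th : R) (s : list nat).
Hypotheses (Hd : -1 < delta) (Hv : valid_history s) (Hth : - / 2 <= th <= / 2).

Lemma cond_expect_exp_dev_le k :
  cond_expect delta s (fun s' => exp (th * dev delta s' (S k))) <=
  exp (4 * th * th) * exp (th * (dev delta s (S k) +
    (attach_rate delta (S (length s)) (S k) * INR (count_deg s (S k)) - pgt delta (S k)))).
Proof.
  set (inc := fun c => (if Nat.eqb (deg s c) (S k) then 1 else 0) - pgt delta (S k)).
  unfold cond_expect.
  rewrite (lsum_ext_in _
    (fun c => exp (th * dev delta s (S k)) * (attach_prob delta s c * exp (th * inc c)))).
  2:{ intros c Hc. apply in_seq in Hc. rewrite dev_snoc by (auto; lia).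
      unfold inc. rewrite Rmult_plus_distr_l, exp_plus. ring. }
  assert (Hmean : lsum (fun c => attach_prob delta s c * inc c) (seq 0 (S (length s))) =
    attach_rate delta (S (length s)) (S k) * INR (count_deg s (S k)) - pgt delta (S k)).
  { unfold inc.
    rewrite (lsum_ext_in _ (fun c => attach_prob delta s c * (if Nat.eqb (deg s c) (S k) then 1 else 0)
                                    + - pgt delta (S k) * attach_prob delta s c)) by (intros; ring).
    rewrite lsum_plus, lsum_mult_l, lsum_attach_prob_deg_eq, lsum_attach_prob by assumption.
    ring. }
  destruct (pgt_bounds delta (S k) Hd) as [Hp0 Hp1]. pose proof (pos_INR (S k)).
  assert (Hinc : forall c, -1 <= inc c <= 1) by (intros c; unfold inc; destruct (Nat.eqb _ _); nra).
  pose proof (mgf_bounded_le (attach_prob delta s) inc (seq 0 (S (length s))) th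
    ltac:(intros; left; now apply attach_prob_pos) (lsum_attach_prob delta s Hd Hv)
    ltac:(intros; apply Hinc) Hth) as Hmgf.
  rewrite Hmean in Hmgf. pose proof (exp_pos (th * dev delta s (S k))).
  rewrite lsum_mult_l, Rmult_plus_distr_l, exp_plus.
  nra.
Qed.

Lemma cond_expect_exp_dev_le_mix k :
  let a := attach_rate delta (S (length s)) (S k) in a <= 1 ->
  cond_expect delta s (fun s' => exp (th * dev delta s' (S k))) <=
  exp (4 * th * th) * ((1 - a) * exp (th * dev delta s (S k)) + a * exp (th * dev delta s k)).
Proof.
  intros a Ha1. assert (Ha0 : 0 < a) by (apply attach_rate_pos; [exact Hd|lia|lia]).
  eapply Rle_trans; [apply cond_expect_exp_dev_le|].
  rewrite (dev_drift delta s k Hd). fold a.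
  apply Rmult_le_compat_l; [left; apply exp_pos|].
  replace (th * ((1 - a) * dev delta s (S k) + a * dev delta s k))
    with ((1 - a) * (th * dev delta s (S k)) + a * (th * dev delta s k)) by ring.
  apply exp_convex. lra.
Qed.

(* For [a > 1] no node can have degree [k+1], so only the drift [-p_{>k+1}] remains. *)
Lemma cond_expect_exp_dev_le_sparse k :
  1 < attach_rate delta (S (length s)) (S k) ->
  cond_expect delta s (fun s' => exp (th * dev delta s' (S k))) <=
  exp (4 * th * th) * ((1 + / INR (S (length s))) * exp (th * dev delta s (S k))).
Proof.
  intros Ha. set (t := INR (S (length s))) in *.
  assert (Ht : 1 <= t) by (unfold t; rewrite S_INR; pose proof (pos_INR (length s)); lra).
  assert (Hk : t + 1 < INR (S k)).
  { unfold attach_rate in Ha. fold t in Ha.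
    assert ((2 + delta) * t < INR (S k) + delta).
    { apply (Rmult_lt_reg_r (/ ((2 + delta) * t))); [apply Rinv_0_lt_compat; nra|].
      rewrite Rinv_r by nra. exact Ha. }
    nra. }
  assert (Hcount : count_deg s (S k) = O).
  { apply count_deg_large. replace (t + 1) with (INR (2 + length s)) in Hk
      by (unfold t; rewrite !S_INR, plus_INR; cbn; ring).
    apply INR_lt in Hk. lia. }
  assert (Hp : pgt delta (S k) <= / t).
  { eapply Rle_trans; [now apply pgt_le_inv|]. apply Rinv_le_contravar; lra. }
  destruct (pgt_bounds delta (S k) Hd) as [Hp0 _].
  assert (Hinvt : 0 < / t <= 1)
    by (split; [apply Rinv_0_lt_compat|rewrite <- Rinv_1; apply Rinv_le_contravar]; lra).
  assert (Hdrift : exp (th * - pgt delta (S k)) <= 1 + / t).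
  { eapply Rle_trans; [apply exp_le_compat with (y := / t / 2); nra|].
    eapply Rle_trans; [apply exp_le_linear; lra|lra]. }
  eapply Rle_trans; [apply cond_expect_exp_dev_le|]. fold t.
  rewrite Hcount, Rmult_0_r, Rminus_0_l, Rmult_plus_distr_l, exp_plus.
  apply Rmult_le_compat_l; [left; apply exp_pos|].
  rewrite Rmult_comm. apply Rmult_le_compat_r; [left; apply exp_pos|exact Hdrift].
Qed.

Lemma cond_expect_exp_dev_le_coef k :
  let t := S (length s) in
  cond_expect delta s (fun s' => exp (th * dev delta s' (S k))) <=
  exp (4 * th * th) * (mgf_diag delta t (S k) * exp (th * dev delta s (S k)) +
                       mgf_subdiag delta t (S k) * exp (th * dev delta s k)).
Proof.
  intros t. unfold mgf_diag, mgf_subdiag.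
  destruct (Rle_dec (attach_rate delta t (S k)) 1) as [Ha|Ha].
  - now apply cond_expect_exp_dev_le_mix.
  - rewrite Rmult_0_l, Rplus_0_r. apply cond_expect_exp_dev_le_sparse. now apply Rnot_le_lt.
Qed.

Lemma cond_expect_mgf_sum_le K :
  cond_expect delta s (mgf_sum delta th K) <=
  exp (4 * th * th) * (1 + / INR (S (length s))) * mgf_sum delta th K s.
Proof.
  unfold cond_expect, mgf_sum. set (t := S (length s)).
  rewrite (lsum_ext_in _ (fun c =>
    lsum (fun k => attach_prob delta s c * exp (th * dev delta (s ++ [c]) k)) (seq 0 (S K))))
    by (intros; now rewrite lsum_mult_l).
  rewrite lsum_comm.
  apply (lsum_bidiagonal_le _ (mgf_diag delta t) (mgf_subdiag delta t)).
  - left; apply exp_pos.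
  - intros; left; apply exp_pos.
  - intros; apply mgf_diag_le; [exact Hd|lia].
  - intros; apply mgf_diag_subdiag_le; [exact Hd|lia].
  - rewrite (lsum_ext_in _ (attach_prob delta s))
      by (intros; rewrite dev_0, Rmult_0_r, exp_0; ring).
    unfold t. rewrite lsum_attach_prob, dev_0, Rmult_0_r, exp_0 by assumption. cbn [mgf_diag].
    pose proof (exp_ineq1_le (4 * th * th)). nra.
  - intros k. apply cond_expect_exp_dev_le_coef.
Qed.

End OneStep.

Lemma expect_mgf_sum_le delta th K m : -1 < delta -> - / 2 <= th <= / 2 ->
  expect delta m (mgf_sum delta th K) <=
  mgf_sum delta th K [] * INR (S m) * exp (4 * th * th * INR m).
Proof.
  intros Hd Hth. induction m as [|m IH].
  - unfold expect, weight. cbn. rewrite Rmult_0_r, exp_0. lra.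
  - rewrite expect_S.
    eapply Rle_trans.
    { apply (expect_le_compat delta m _
        (fun s => exp (4 * th * th) * (1 + / INR (S m)) * mgf_sum delta th K s)); [exact Hd|].
      intros s Hs. destruct (in_histories m s Hs) as [<- Hv]. now apply cond_expect_mgf_sum_le. }
    rewrite expect_mult_l.
    assert (Hm : 0 < INR (S m)) by (apply lt_0_INR; lia).
    assert (0 <= exp (4 * th * th) * (1 + / INR (S m)))
      by (apply Rmult_le_pos; [left; apply exp_pos|pose proof (Rinv_0_lt_compat _ Hm); lra]).
    eapply Rle_trans; [apply Rmult_le_compat_l; [assumption|exact IH]|].
    right. replace (4 * th * th * INR (S m)) with (4 * th * th + 4 * th * th * INR m)
      by (rewrite S_INR; ring).
    rewrite exp_plus, (S_INR (S m)). field. lra.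
Qed.

Lemma mgf_sum_nil_le delta th K : -1 < delta -> - / 2 <= th <= / 2 ->
  mgf_sum delta th K [] <= 2 * INR (S K).
Proof.
  intros Hd Hth. unfold mgf_sum.
  replace (2 * INR (S K)) with (lsum (fun _ => 2) (seq 0 (S K)))
    by (rewrite lsum_const, length_seq; ring).
  apply lsum_le_compat. intros k _.
  destruct (pgt_bounds delta k Hd) as [Hp0 Hp1]. pose proof (pos_INR k).
  assert (Hn : (Ngt [] k <= 1)%nat)
    by (unfold Ngt; cbn [length seq filter]; destruct (Nat.ltb k (deg [] 0)); cbn; lia).
  apply le_INR in Hn. change (INR 1) with 1 in Hn. pose proof (pos_INR (Ngt [] k)).
  eapply Rle_trans; [apply exp_le_compat with (y := / 2)|].
  - assert (pgt delta k <= 1) by nra.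
    unfold dev. cbn [length INR]. nra.
  - eapply Rle_trans; [apply exp_le_linear|]; lra.
Qed.

Lemma probA_nonneg delta n E : -1 < delta -> 0 <= probA delta n E.
Proof.
  intros Hd.
  apply (lsum_nonneg (fun s => if excluded_middle_informative (E s) then weight delta s else 0)).
  intros s _. destruct (excluded_middle_informative (E s)); [now apply weight_nonneg|lra].
Qed.

Lemma probA_le_markov delta n (E : list nat -> Prop) (F : list nat -> R) (x : R) :
  -1 < delta -> 0 < x -> (forall s, In s (histories n) -> 0 <= F s) ->
  (forall s, In s (histories n) -> E s -> x <= F s) ->
  probA delta (S n) E <= expect delta n F / x.
Proof.
  intros Hd Hx HF HE. unfold probA, expect. rewrite Nat.sub_1_r. cbn [Nat.pred].
  fold (lsum (fun s => if excluded_middle_informative (E s) then weight delta s else 0) (histories n)).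
  unfold Rdiv. rewrite Rmult_comm, <- lsum_mult_l. apply lsum_le_compat; intros s Hs.
  pose proof (weight_nonneg delta s Hd). pose proof (HF s Hs).
  assert (Hix : 0 < / x) by now apply Rinv_0_lt_compat.
  destruct (excluded_middle_informative (E s)) as [Hs'|].
  - specialize (HE s Hs Hs').
    assert (1 <= / x * F s).
    { apply (Rmult_le_reg_l x); [exact Hx|]. rewrite <- Rmult_assoc, Rinv_r, Rmult_1_r; lra. }
    nra.
  - apply Rmult_le_pos; [lra|]. now apply Rmult_le_pos.
Qed.

Lemma large_deviation_le_mgf_sum delta s lam x : -1 < delta -> 0 <= lam -> 1 < x ->
  (exists k, Rabs (INR (Ngt s k) - INR (S (length s)) * pgt delta k) >= x) ->
  exp (lam * x) <= mgf_sum delta lam (S (length s)) s + mgf_sum delta (- lam) (S (length s)) s.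
Proof.
  intros Hd Hlam Hx [k Hk]. fold (dev delta s k) in Hk.
  assert (Hkn : (k <= S (length s))%nat).
  { apply Nat.nlt_ge. intros Hlt. unfold dev in Hk. rewrite Ngt_large in Hk by lia.
    destruct (pgt_bounds delta k Hd) as [Hp0 Hp1].
    assert (INR (S (length s)) <= INR k + 1) by (rewrite <- S_INR; apply le_INR; lia).
    assert (0 <= (INR k + 1 - INR (S (length s))) * pgt delta k) by (apply Rmult_le_pos; lra).
    pose proof (pos_INR (S (length s))).
    rewrite Rabs_left1 in Hk; change (INR 0) with 0 in *; nra. }
  assert (Hin : In k (seq 0 (S (S (length s))))) by (apply in_seq; lia).
  pose proof (mgf_sum_nonneg delta lam (S (length s)) s).
  pose proof (mgf_sum_nonneg delta (- lam) (S (length s)) s).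
  assert (Hexp_pos : forall th k, 0 <= exp (th * dev delta s k)) by (intros; left; apply exp_pos).
  pose proof (lsum_ge_term (fun k => exp (lam * dev delta s k)) _ k (fun k _ => Hexp_pos _ k) Hin).
  pose proof (lsum_ge_term (fun k => exp (- lam * dev delta s k)) _ k (fun k _ => Hexp_pos _ k) Hin).
  cbv beta in *. unfold mgf_sum in *.
  destruct (Rle_dec 0 (dev delta s k)).
  - rewrite Rabs_pos_eq in Hk by assumption.
    assert (exp (lam * x) <= exp (lam * dev delta s k))
      by (apply exp_le_compat, Rmult_le_compat_l; lra).
    lra.
  - rewrite Rabs_left1 in Hk by lra.
    assert (exp (lam * x) <= exp (- lam * dev delta s k)).
    { apply exp_le_compat. replace (- lam * dev delta s k) with (lam * - dev delta s k) by ring.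
      apply Rmult_le_compat_l; lra. }
    lra.
Qed.

Lemma expect_mgf_sum_bound delta n th : -1 < delta -> - / 2 <= th <= / 2 ->
  let N := INR (S n) in
  expect delta n (mgf_sum delta th (S n)) <= 2 * (N + 1) * N * exp (4 * th * th * N).
Proof.
  intros Hd Hth N.
  eapply Rle_trans; [now apply expect_mgf_sum_le|]. fold N.
  pose proof (mgf_sum_nil_le delta th (S n) Hd Hth) as Hnil. rewrite S_INR in Hnil. fold N in Hnil.
  pose proof (mgf_sum_nonneg delta th (S n) []).
  assert (HN : 0 <= N) by apply pos_INR.
  assert (Hexp : exp (4 * th * th * INR n) <= exp (4 * th * th * N)).
  { apply exp_le_compat, Rmult_le_compat_l; [nra|]. unfold N. rewrite S_INR. lra. }
  pose proof (exp_pos (4 * th * th * INR n)).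
  apply Rmult_le_compat; [nra|lra|apply Rmult_le_compat_r; assumption|exact Hexp].
Qed.

(* The choice [lambda = sqrt (ln N / N) / 2] balances the Gaussian factor [exp (4 lambda^2 N)]
   against the Chernoff threshold. *)
Lemma sqrt_log_tuning N : 1 <= N ->
  let lam := sqrt (ln N / N) / 2 in
  0 <= lam <= / 2 /\ exp (4 * lam * lam * N) = N /\
  N * N * N * N <= exp (lam * (8 * (1 + sqrt (N * ln N)))).
Proof.
  intros HN lam. set (L := ln N).
  assert (HL0 : 0 <= L).
  { destruct (Req_dec N 1) as [->|E]; [unfold L; rewrite ln_1; lra|].
    left. unfold L. rewrite <- ln_1. apply ln_increasing; lra. }
  assert (HLN : L < N).
  { pose proof (exp_ineq1_le N). unfold L. rewrite <- (ln_exp N) at 2. apply ln_increasing; lra. }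
  set (r := sqrt (L / N)).
  assert (HLN0 : 0 <= L / N) by (apply Rmult_le_pos; [lra|left; apply Rinv_0_lt_compat; lra]).
  assert (Hr0 : 0 <= r) by apply sqrt_pos.
  assert (HrN : N * (r * r) = L) by (unfold r; rewrite sqrt_sqrt by assumption; field; lra).
  assert (Hr1 : r <= 1).
  { assert (L / N <= 1).
    { apply (Rmult_le_reg_r N); [lra|]. unfold Rdiv. rewrite Rmult_assoc, Rinv_l; lra. }
    assert (r * r <= 1) by (unfold r; rewrite sqrt_sqrt; assumption).
    nra. }
  assert (Hsq : sqrt (N * L) = N * r).
  { rewrite <- HrN. replace (N * (N * (r * r))) with ((N * r) * (N * r)) by ring.
    apply sqrt_square. nra. }
  split; [unfold lam; fold L r; lra|]. split.
  - replace (4 * lam * lam * N) with L by (unfold lam; fold L r; rewrite <- HrN; field).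
    unfold L. apply exp_ln. lra.
  - replace (N * N * N * N) with (exp (L + L + L + L))
      by (rewrite !exp_plus; unfold L; rewrite exp_ln by lra; ring).
    apply exp_le_compat. unfold lam. fold L r. rewrite Hsq. nra.
Qed.

Lemma probA_large_deviation_le delta n : -1 < delta ->
  probA delta (S n) (fun s => exists k : nat,
    Rabs (INR (Ngt s k) - INR (S n) * pgt delta k) >= 8 * (1 + sqrt (INR (S n) * ln (INR (S n)))))
  <= 8 / INR (S n).
Proof.
  intros Hd. set (N := INR (S n)).
  assert (HN : 1 <= N) by (unfold N; rewrite S_INR; pose proof (pos_INR n); lra).
  destruct (sqrt_log_tuning N HN) as (Hlam & Hgauss & Hthreshold).
  set (lam := sqrt (ln N / N) / 2) in *. set (x := 8 * (1 + sqrt (N * ln N))) in *.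
  assert (Hx : 8 <= x) by (unfold x; pose proof (sqrt_pos (N * ln N)); lra).
  set (F := fun s => mgf_sum delta lam (S n) s + mgf_sum delta (- lam) (S n) s).
  eapply Rle_trans.
  { apply (probA_le_markov delta n _ F (exp (lam * x)) Hd (exp_pos _)).
    - intros s _. unfold F. pose proof (mgf_sum_nonneg delta lam (S n) s).
      pose proof (mgf_sum_nonneg delta (- lam) (S n) s). lra.
    - intros s Hs Hdev. destruct (in_histories n s Hs) as [Hl _].
      pose proof (large_deviation_le_mgf_sum delta s lam x Hd ltac:(lra) ltac:(lra)) as Hld.
      rewrite Hl in Hld. exact (Hld Hdev). }
  unfold F. rewrite expect_plus.
  pose proof (expect_mgf_sum_bound delta n lam Hd ltac:(lra)) as Hpos.
  pose proof (expect_mgf_sum_bound delta n (- lam) Hd ltac:(lra)) as Hneg.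
  cbv zeta in Hpos, Hneg. fold N in Hpos, Hneg.
  replace (4 * - lam * - lam * N) with (4 * lam * lam * N) in Hneg by ring.
  rewrite Hgauss in Hpos, Hneg.
  set (E := exp (lam * x)) in *. assert (HE : 0 < E) by apply exp_pos.
  set (Sp := expect delta n (mgf_sum delta lam (S n))) in *.
  set (Sm := expect delta n (mgf_sum delta (- lam) (S n))) in *.
  apply (Rmult_le_reg_r (E * N)); [nra|].
  replace ((Sp + Sm) / E * (E * N)) with ((Sp + Sm) * N) by (field; lra).
  replace (8 / N * (E * N)) with (8 * E) by (field; lra).
  assert ((Sp + Sm) * N <= 4 * (N + 1) * N * N * N) by (apply Rmult_le_compat_r; lra).
  assert (4 * (N + 1) * N * N * N <= 8 * (N * N * N * N)) by nra.
  lra.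
Qed.

Theorem mainTheorem6 (delta : R) (hdelta : -1 < delta) :
  exists C : R, 0 < C /\
    Un_cv (fun n : nat =>
      probA delta (S n) (fun s =>
        exists k : nat,
          Rabs (INR (Ngt s k) - INR (S n) * pgt delta k)
            >= C * (1 + sqrt (INR (S n) * ln (INR (S n))))))
      0.
Proof.
  exists 8. split; [lra|].
  intros eps Heps. destruct (INR_archimed eps 8 Heps) as [M HM].
  exists M. intros n Hn. unfold R_dist. rewrite Rminus_0_r, Rabs_pos_eq by now apply probA_nonneg.
  eapply Rle_lt_trans; [now apply probA_large_deviation_le|].
  assert (INR M <= INR (S n)) by (apply le_INR; lia).
  assert (0 < INR (S n)) by (apply lt_0_INR; lia).
  apply (Rmult_lt_reg_r (INR (S n))); [assumption|].
  unfold Rdiv. rewrite Rmult_assoc, Rinv_l by lra. nra.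
Qed.
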